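(* Let $\mathbf{v}\in\mathbb{R}^n$ with $\|\mathbf{v}\|_1:=\sum_{k=1}^n|v_k|<1$ and let $s:=\sum_{k=1}^n v_k$. Then \[ 0\le\prod_{k=1}^n\frac{1}{1+v_k}-(1-s)\le\frac{\|\mathbf{v}\|_1^2}{1-\|\mathbf{v}\|_1} \] and \[ -\frac{\|\mathbf{v}\|_1^2}{(1-\|\mathbf{v}\|_1)^3}\Bigl(1+\tfrac14\|\mathbf{v}\|_1^2\Bigr)\le\prod_{k=1}^n(1+v_k)-(1+s)\le\frac{s^2}{1-s}. \] *)

From mathcomp Require Import all_boot all_order all_algebra.
From mathcomp Require Import reals.
Set Implicit Arguments. Unset Strict Implicit. Unset Printing Implicit Defensive.
Import Order.TTheory GRing.Theory Num.Theory.
Local Open Scope ring_scope.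

Definition norm1 (R : realType) (n : nat) (v : 'I_n -> R) : R :=
  \sum_(k < n) `|v k|.

(* Both products are compared with their linear part [1 -+ s] through the
   majorant principle: the deviation of [prod (1 + v_k)] from [1 + s] is at
   most that of [prod (1 + |v_k|)] from [1 + N], and the deviation of
   [prod (1 + v_k)^-1] from [1 - s] is at most that of [prod (1 - |v_k|)^-1].
   Both majorants are at most [1 / (1 - N)], by [prod (1 + a_k) <= exp (sum a_k)]
   and by the Weierstrass product inequality [prod (1 - a_k) >= 1 - sum a_k],
   which gives the bound [N^2 / (1 - N)].  The one-sided bounds come from
   [1 - s <= exp (- s) <= prod (1 + v_k)^-1] and
   [prod (1 + v_k) <= exp s <= 1 / (1 - s)]. *)

From mathcomp Require Import all_boot all_order all_algebra.
From mathcomp Require Import reals sequences exp ring lra.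
Import Order.TTheory GRing.Theory Num.Theory.
Local Open Scope ring_scope.

Lemma prod1D_le_expR {R : realType} {I : Type} (r : seq I) (P : pred I)
    (a : I -> R) :
  (forall i, P i -> -1 <= a i) ->
  \prod_(i <- r | P i) (1 + a i) <= expR (\sum_(i <- r | P i) a i).
Proof.
move=> a_ge; rewrite expR_sum; apply: ler_prod => i Pi.
by rewrite expR_ge1Dx andbT; have := a_ge i Pi; lra.
Qed.

Lemma expR_le_inv1B {R : realType} {x : R} : x < 1 -> expR x <= (1 - x)^-1.
Proof.
move=> x_lt1; rewrite -[expR x]invrK -expRN lef_pV2 ?posrE ?expR_gt0 ?subr_gt0 //.
by have := expR_ge1Dx (- x); lra.
Qed.

Lemma sqr_div1B {R : fieldType} (x : R) :
  1 - x != 0 -> x ^+ 2 / (1 - x) = (1 - x)^-1 - (1 + x).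
Proof. by move=> nz; field. Qed.

Lemma weierstrass_prod1B {R : realDomainType} {I : Type} (r : seq I)
    (a : I -> R) :
  (forall i, 0 <= a i <= 1) -> 1 - \sum_(i <- r) a i <= \prod_(i <- r) (1 - a i).
Proof.
move=> a01; elim: r => [|i r IH]; first by rewrite !big_nil subr0.
rewrite !big_cons; have /andP[a_ge0 a_le1] := a01 i.
have sum_ge0 : 0 <= \sum_(j <- r) a j by apply: sumr_ge0 => j _; case/andP: (a01 j).
have a'_ge0 : 0 <= 1 - a i by lra.
have := mulr_ge0 a_ge0 sum_ge0; have := ler_wpM2l a'_ge0 IH; nra.
Qed.

Section ProductMajorant.
Context {R : realDomainType} {I : Type} {x t y : I -> R}.
Hypothesis xy_dev : forall i, `|x i - (1 + t i)| <= y i - (1 + `|t i|).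

(* Majorant principle: writing [x_i = 1 + t_i + e_i] and
   [y_i = 1 + |t_i| + e'_i] with [|e_i| <= e'_i], the nonlinear part of
   [prod x_i] is dominated by that of [prod y_i], all of whose expansion
   terms are nonnegative. *)
Lemma ler_norm_prod_sub_linear (r : seq I) :
  `|\prod_(i <- r) x i - (1 + \sum_(i <- r) t i)|
    <= \prod_(i <- r) y i - (1 + \sum_(i <- r) `|t i|).
Proof.
elim: r => [|i r IH]; first by rewrite !big_nil addr0 subrr normr0.
rewrite !big_cons.
set X := \prod_(j <- r) x j in IH *; set T := \sum_(j <- r) t j in IH *.
set Y := \prod_(j <- r) y j in IH *; set A := \sum_(j <- r) `|t j| in IH *.
have T_le : `|T| <= A by apply: ler_norm_sum.
have X_le : `|X| <= Y.
  have := ler_normD (1 + T) (X - (1 + T)); rewrite addrC subrK.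
  have := ler_normD 1 T; rewrite normr1; lra.
have e_ge0 : 0 <= y i - (1 + `|t i|) := le_trans (normr_ge0 _) (xy_dev i).
have -> : x i * X - (1 + (t i + T))
    = (x i - (1 + t i)) * X + (1 + t i) * (X - (1 + T)) + t i * T by ring.
have -> : y i * Y - (1 + (`|t i| + A))
    = (y i - (1 + `|t i|)) * Y + (1 + `|t i|) * (Y - (1 + A)) + `|t i| * A by ring.
apply: le_trans (ler_normD _ _) _; apply: lerD; last first.
  by rewrite normrM ler_wpM2l.
apply: le_trans (ler_normD _ _) _; rewrite !normrM; apply: lerD.
  exact: ler_pM.
apply: ler_pM => //; by have := ler_normD 1 (t i); rewrite normr1.
Qed.

End ProductMajorant.

Lemma ler_norm_inv1D_sub_linear {R : realFieldType} (a : R) : `|a| < 1 ->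
  `|(1 + a)^-1 - (1 + - a)| <= (1 - `|a|)^-1 - (1 + `|- a|).
Proof.
move=> a_lt1; have := a_lt1; rewrite ltr_norml => /andP[a_gtN1 _].
have pos1Da : 0 < 1 + a by lra.
have -> : (1 + a)^-1 - (1 + - a) = a ^+ 2 / (1 + a) by field; rewrite gt_eqF.
rewrite normrN -sqr_div1B ?subr_eq0 ?gt_eqF //.
rewrite normrM normrX normfV (gtr0_norm pos1Da) real_normK ?num_real //.
rewrite ler_wpM2l ?sqr_ge0 // lef_pV2 ?posrE ?subr_gt0 //.
by have := ler_norm (- a); rewrite normrN; lra.
Qed.

Lemma ler_sqr_div1B_cube {R : realFieldType} {x : R} : 0 <= x -> x < 1 ->
  x ^+ 2 / (1 - x) <= x ^+ 2 / (1 - x) ^+ 3 * (1 + x ^+ 2 / 4).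
Proof.
move=> x_ge0 x_lt1; have x'_gt0 : 0 < 1 - x by rewrite subr_gt0.
apply: le_trans (ler_peMr _ _); last 2 first.
- by rewrite divr_ge0 ?sqr_ge0 ?exprn_ge0 ?ltW.
- by rewrite lerDl divr_ge0 ?sqr_ge0.
rewrite ler_wpM2l ?sqr_ge0 // lef_pV2 ?posrE ?exprn_gt0 //.
rewrite -[leRHS]expr1 ler_wiXn2l //; lra.
Qed.

Section ProductsNearOne.
Context {R : realType} {I : Type} {r : seq I} {a : I -> R}.
Let A := \sum_(i <- r) `|a i|.

Lemma prod_inv1D_ge1B : (forall i, -1 < a i) ->
  1 - \sum_(i <- r) a i <= \prod_(i <- r) (1 + a i)^-1.
Proof.
move=> a_gtN1; rewrite prodfV.
apply: le_trans (expR_ge1Dx (- _)) _.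
rewrite expRN lef_pV2 ?posrE ?expR_gt0 //.
- by apply: prod1D_le_expR => i _; apply/ltW.
- by apply: prodr_gt0 => i _; rewrite -ltrBlDl sub0r.
Qed.

Lemma prod1D_sub_linear_le : (forall i, -1 <= a i) -> \sum_(i <- r) a i < 1 ->
  \prod_(i <- r) (1 + a i) - (1 + \sum_(i <- r) a i)
    <= (\sum_(i <- r) a i) ^+ 2 / (1 - \sum_(i <- r) a i).
Proof.
move=> a_geN1 sum_lt1; rewrite sqr_div1B ?subr_eq0 ?gt_eqF // lerD2r.
exact: le_trans (prod1D_le_expR _ _ _ (fun i _ => a_geN1 i)) (expR_le_inv1B sum_lt1).
Qed.

Hypothesis A_lt1 : A < 1.

Lemma ler_norm_prod1D_sub_linear :
  `|\prod_(i <- r) (1 + a i) - (1 + \sum_(i <- r) a i)| <= A ^+ 2 / (1 - A).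
Proof.
have dev : `|\prod_(i <- r) (1 + a i) - (1 + \sum_(i <- r) a i)|
    <= \prod_(i <- r) (1 + `|a i|) - (1 + A).
  by apply: ler_norm_prod_sub_linear => i; rewrite !subrr normr0.
apply: le_trans dev _; rewrite sqr_div1B ?subr_eq0 ?gt_eqF // lerD2r.
apply: le_trans (expR_le_inv1B A_lt1).
by apply: prod1D_le_expR => i _; rewrite (le_trans (lerN10 R)).
Qed.

Lemma ler_norm_prod_inv1D_sub_linear : (forall i, `|a i| < 1) ->
  `|\prod_(i <- r) (1 + a i)^-1 - (1 - \sum_(i <- r) a i)| <= A ^+ 2 / (1 - A).
Proof.
move=> a_lt1.
have dev : `|\prod_(i <- r) (1 + a i)^-1 - (1 - \sum_(i <- r) a i)|
    <= \prod_(i <- r) (1 - `|a i|)^-1 - (1 + A).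
  rewrite -sumrN /A -(eq_bigr _ (fun i _ => normrN (a i))).
  by apply: ler_norm_prod_sub_linear => i; apply: ler_norm_inv1D_sub_linear.
apply: le_trans dev _; rewrite sqr_div1B ?subr_eq0 ?gt_eqF // lerD2r.
have W_ge : 1 - A <= \prod_(i <- r) (1 - `|a i|).
  by apply: weierstrass_prod1B => i; rewrite normr_ge0 ltW.
by rewrite prodfV lef_pV2 ?posrE ?subr_gt0 //; apply: lt_le_trans W_ge; rewrite subr_gt0.
Qed.

End ProductsNearOne.

Lemma ler_norm_norm1 {R : realType} {n : nat} (v : 'I_n -> R) (k : 'I_n) :
  `|v k| <= norm1 v.
Proof. by rewrite /norm1 (bigD1 k) //= lerDl sumr_ge0. Qed.

Theorem lemma7 (R : realType) (n : nat) (v : 'I_n -> R)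
  (hv : norm1 v < 1) :
  let s := \sum_(k < n) v k in
  let N := norm1 v in
  (0 <= \prod_(k < n) (1 + v k)^-1 - (1 - s) /\
   \prod_(k < n) (1 + v k)^-1 - (1 - s) <= N ^+ 2 / (1 - N)) /\
  (- (N ^+ 2 / (1 - N) ^+ 3 * (1 + N ^+ 2 / 4))
     <= \prod_(k < n) (1 + v k) - (1 + s) /\
   \prod_(k < n) (1 + v k) - (1 + s) <= s ^+ 2 / (1 - s)).
Proof.
move=> s N.
have N_ge0 : 0 <= N by apply: sumr_ge0.
have v_lt1 k : `|v k| < 1 := le_lt_trans (ler_norm_norm1 v k) hv.
have v_gtN1 k : -1 < v k by move: (v_lt1 k); rewrite ltr_norml => /andP[].
have s_lt1 : s < 1.
  by apply: le_lt_trans hv; rewrite (le_trans (ler_norm s)) //; apply: ler_norm_sum.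
split; split.
- by rewrite subr_ge0; apply: prod_inv1D_ge1B.
- exact: le_trans (ler_norm _) (ler_norm_prod_inv1D_sub_linear hv v_lt1).
- rewrite lerNl; apply: le_trans _ (ler_sqr_div1B_cube N_ge0 hv).
  by apply: le_trans (ler_norm _) _; rewrite normrN; exact: ler_norm_prod1D_sub_linear.
- by apply: prod1D_sub_linear_le => // k; apply/ltW.
Qed.
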